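(* Let $\Theta$ be a subset of a Polish space with metric $d$, and let $\{P^\theta:\theta\in\Theta\}$ be probability measures on $(\Omega,\mathcal{F})$ such that $\theta\mapsto P^\theta$ is continuous in total variation: for every $\theta\in\Theta$ and $\varepsilon>0$ there is $\delta>0$ with $\sup_{A\in\mathcal{F}}|P^\theta(A)-P^{\theta'}(A)|<\varepsilon$ whenever $d(\theta,\theta')<\delta$. Then there exists a probability measure $\mathbb{P}$ which is a countable convex combination of measures $P^\theta$, $\theta\in\Theta$, such that $P^\theta\ll\mathbb{P}$ for all $\theta\in\Theta$.
   Context: $(\Omega,\mathcal{F})$ is a measurable space. A countable convex combination means $\sum_k\lambda_kP^{\theta_k}$ with $\theta_k\in\Theta$, $\lambda_k\ge0$, $\sum_k\lambda_k=1$. *)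

From HB Require Import structures.
From mathcomp Require Import all_boot all_order all_algebra.
From mathcomp Require Import all_classical all_reals all_analysis.
Set Implicit Arguments. Unset Strict Implicit. Unset Printing Implicit Defensive.
Import Order.TTheory GRing.Theory Num.Theory.
Local Open Scope classical_set_scope.
Local Open Scope ring_scope.

Definition is_metric (R : realType) (X : Type) (d : X -> X -> R) : Prop :=
  (forall x y, 0 <= d x y) /\ (forall x y, d x y = 0 <-> x = y) /\
  (forall x y, d x y = d y x) /\ (forall x y z, d x z <= d x y + d y z).

Definition metric_complete (R : realType) (X : Type) (d : X -> X -> R) : Prop :=
  forall u : nat -> X,
    (forall e, 0 < e -> exists N, forall m n, (N <= m)%N -> (N <= n)%N -> d (u m) (u n) < e) ->
    exists x, forall e, 0 < e -> exists N, forall n, (N <= n)%N -> d (u n) x < e.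

Definition metric_separable (R : realType) (X : Type) (d : X -> X -> R) : Prop :=
  exists D : set X, countable D /\
    forall x e, 0 < e -> exists y, D y /\ d x y < e.

Definition polish_metric (R : realType) (X : Type) (d : X -> X -> R) : Prop :=
  [/\ is_metric d, metric_complete d & metric_separable d].

From HB Require Import structures.
From mathcomp Require Import all_boot all_order all_algebra.
From mathcomp Require Import all_classical all_reals all_analysis.
Set Implicit Arguments. Unset Strict Implicit. Unset Printing Implicit Defensive.
Import Order.TTheory GRing.Theory Num.Theory.
Local Open Scope classical_set_scope.
Local Open Scope ring_scope.

(* Take a sequence (th_k) in Theta that is dense in Theta (a subset of a
   separable metric space is separable) and let Pmix be the mixture of the
   P (th_k) with weights 2^-(k+1).  If Pmix A = 0 then P (th_k) A = 0 for all k,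
   and for t in Theta total-variation continuity gives th_k with
   |P t A - P (th_k) A| < eps, whence P t A = 0. *)

Section separable_subset.
Context (R : realType) (X : Type) (dist : X -> X -> R).
Hypotheses (dist_sym : forall x y, dist x y = dist y x)
  (dist_triangle : forall x y z, dist x z <= dist x y + dist y z).

Definition dense_seq (A : set X) (s : nat -> X) : Prop :=
  forall x, A x -> forall e, 0 < e -> exists k, dist x (s k) < e.

Lemma metric_separable_seq (x0 : X) :
  metric_separable dist -> exists s, dense_seq setT s.
Proof.
move=> [D [cD D_dense]].
have [y [Dy _]] := D_dense x0 1 ltr01.
have /pfcard_geP[D0|/surjfunPex[s Ds]] := cD; first by rewrite D0 in Dy.
exists s => x _ e e0; have [z [Dz dxz]] := D_dense x e e0.
by move: Dz; rewrite Ds => -[k _ skz]; exists k; rewrite skz.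
Qed.

Lemma separable_subset_seq (A : set X) (s : nat -> X) :
  dense_seq setT s -> A !=set0 ->
  exists2 a : nat -> X, (forall k, A (a k)) & dense_seq A a.
Proof.
move=> s_dense [a0 Aa0].
pose close (p : nat * nat) x := dist (s p.1) x < p.2.+1%:R^-1.
have /choice[f fP] : forall p, exists x,
    A x /\ ((exists2 x, A x & close p x) -> close p x).
  move=> p; have [[x Ax px]|none] := pselect (exists2 x, A x & close p x).
    by exists x; split=> // _.
  by exists a0; split=> // /none.
exists (fun k => if choice.unpickle k is Some p then f p else a0).
  by move=> k; case: choice.unpickle => // p; exact: (fP p).1.
move=> x Ax e e0.
have [n ne] : exists n, 0 + n.+1%:R^-1 < e / 2.
  by apply: ltr_add_invr; rewrite divr_gt0.
rewrite add0r in ne.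
have n_gt0 : 0 < n.+1%:R^-1 :> R by rewrite invr_gt0.
have [i dxi] := s_dense x I _ n_gt0.
exists (choice.pickle (i, n)); rewrite choice.pickleK.
have close_f : close (i, n) (f (i, n)).
  by apply: (fP (i, n)).2; exists x; rewrite // /close dist_sym.
apply: le_lt_trans (dist_triangle x (s i) _) _.
by rewrite [e]splitr ltrD // (lt_trans _ ne).
Qed.

End separable_subset.

Section total_variation.
Context d (T : measurableType d) (R : realType).

Definition tv_dist (mu nu : set T -> \bar R) : \bar R :=
  ereal_sup [set `|mu A - nu A|%E | A in [set A | measurable A]].

Lemma tv_dist_ge (mu nu : set T -> \bar R) A :
  measurable A -> (`|mu A - nu A| <= tv_dist mu nu)%E.
Proof. by move=> mA; apply: ereal_sup_ubound; exists A. Qed.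

Lemma null_of_tv_approx (nu : {measure set T -> \bar R})
    (mu : nat -> set T -> \bar R) A :
  measurable A -> (forall k, mu k A = 0%E) ->
  (forall e, 0 < e -> exists k, (tv_dist nu (mu k) < e%:E)%E) -> nu A = 0%E.
Proof.
move=> mA muA0 approx; apply/eqP; rewrite eq_le measure_ge0 andbT.
apply/lee_addgt0Pr => e e0; rewrite add0e.
have [k tv_lt] := approx e e0.
have := tv_dist_ge nu (mu k) mA.
by rewrite muA0 sube0 gee0_abs // => /le_trans; apply; exact: ltW.
Qed.

End total_variation.

Lemma nneseries_ge_term (R : realType) (u : (\bar R)^nat) k :
  (forall n, 0 <= u n)%E -> (u k <= \sum_(0 <= n <oo) u n)%E.
Proof.
move=> u_ge0; apply: le_trans (nneseries_lim_ge k.+1 (fun n _ _ => u_ge0 n)).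
by rewrite big_nat_recr //= leeDr // sume_ge0.
Qed.

Section geometric_mixture.
Context d (T : measurableType d) (R : realType) (mu : nat -> probability T R).

Definition geo_weight (k : nat) : R := (2 ^ k.+1)%:R^-1.

Lemma geo_weight_gt0 k : 0 < geo_weight k.
Proof. by rewrite invr_gt0 ltr0n expn_gt0. Qed.

Lemma geo_weight_sum : (\sum_(0 <= k <oo) (geo_weight k)%:E = 1)%E.
Proof.
have := @cvg_geometric_eseries_half R 1 0.
rewrite expr0 divr1 => /cvg_lim <- //.
by apply: congr_lim; apply/funext => n; apply: eq_bigr => k _; rewrite div1r addn1.
Qed.

Definition geo_weight_nng (k : nat) : {nonneg R} := NngNum (ltW (geo_weight_gt0 k)).

Definition mixture : set T -> \bar R :=
  mseries (fun k => mscale (geo_weight_nng k) (mu k)) 0.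

HB.instance Definition _ := Measure.on mixture.

Lemma mixtureE A : mixture A = (\sum_(0 <= k <oo) (geo_weight k)%:E * mu k A)%E.
Proof. by []. Qed.

Lemma mixture_setT : mixture setT = 1%E.
Proof.
rewrite mixtureE; under eq_eseriesr do rewrite probability_setT mule1.
exact: geo_weight_sum.
Qed.

HB.instance Definition _ := Measure_isProbability.Build _ _ _ mixture mixture_setT.

Lemma mixture_eq0 A k : mixture A = 0%E -> mu k A = 0%E.
Proof.
move=> mixA0; apply/eqP; rewrite eq_le measure_ge0 andbT.
have : ((geo_weight k)%:E * mu k A <= 0)%E.
  rewrite -mixA0 mixtureE; apply: nneseries_ge_term => n.
  by rewrite mule_ge0 // lee_fin ltW // geo_weight_gt0.
by rewrite pmule_rle0 // lte_fin geo_weight_gt0.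
Qed.

Lemma tv_approx_dominates_mixture (nu : {measure set T -> \bar R}) :
  (forall e, 0 < e -> exists k, (tv_dist nu (mu k) < e%:E)%E) -> nu `<< mixture.
Proof.
move=> approx; apply/null_content_dominatesP => A mA /mixture_eq0 mixA0.
exact: null_of_tv_approx mA mixA0 approx.
Qed.

End geometric_mixture.

Theorem lemma6p8 (R : realType) (X : Type) (dist : X -> X -> R)
  (dT : measure_display) (T : measurableType dT)
  (Theta : set X) (P : X -> probability T R) :
  polish_metric dist -> Theta !=set0 ->
  (forall th, Theta th -> forall eps : R, 0 < eps ->
     exists2 delta : R, 0 < delta &
       forall th', Theta th' -> dist th th' < delta ->
         (ereal_sup [set `|P th A - P th' A|%E | A in [set A | measurable A]]
           < eps%:E)%E) ->
  exists (Pmix : probability T R) (th : nat -> X) (lam : nat -> R),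
    [/\ (forall k, Theta (th k)),
        (forall k, 0 <= lam k),
        (\sum_(0 <= k <oo) (lam k)%:E = 1)%E,
        (forall A, measurable A ->
           Pmix A = \sum_(0 <= k <oo) ((lam k)%:E * P (th k) A))%E &
        (forall t, Theta t -> P t `<< Pmix)].
Proof.
move=> [[_ [_ [dist_sym dist_triangle]]] _ sepX] [t0 Theta_t0] tv_cont.
have [s s_dense] := metric_separable_seq t0 sepX.
have [th Theta_th th_dense] :=
  separable_subset_seq dist_sym dist_triangle s_dense (ex_intro _ t0 Theta_t0).
exists (mixture (P \o th)), th, (@geo_weight R); split => //.
- by move=> k; exact/ltW/geo_weight_gt0.
- exact: geo_weight_sum.
- move=> t Theta_t; apply: tv_approx_dominates_mixture => e e0.
  have [delta delta0 tv_close] := tv_cont t Theta_t e e0.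
  have [k dk] := th_dense t Theta_t delta delta0.
  by exists k; exact: tv_close.
Qed.
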